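(* Let $G$ be a connected graph and let $uv$ be a cut edge of $G$ that is not pendent (i.e. $d_G(u)\ge 2$ and $d_G(v)\ge 2$). Let $G'$ be the graph obtained from $G$ by contracting the edge $uv$ onto the vertex $u$ (so $u$ becomes adjacent to all former neighbors of $u$ and of $v$ other than $u,v$) and then adding a new pendent vertex (named $v$) adjacent to $u$. Then $SO(G)<SO(G')$.
   Context: For a graph $G$, $d_G(w)$ denotes the degree of vertex $w$, and the Sombor index is $SO(G)=\sum_{ab\in E(G)}\sqrt{d_G(a)^2+d_G(b)^2}$. A cut edge is an edge whose deletion disconnects the graph; it is pendent if one of its end vertices has degree one. *)

From HB Require Import structures.
From mathcomp Require Import all_boot all_order all_algebra.
Set Implicit Arguments. Unset Strict Implicit. Unset Printing Implicit Defensive.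
Import Order.TTheory GRing.Theory Num.Theory.

Definition simple_graph (T : finType) (e : rel T) : Prop :=
  symmetric e /\ irreflexive e.

Definition connected_graph (T : finType) (e : rel T) : Prop :=
  forall x y : T, connect e x y.

Definition deg (T : finType) (e : rel T) (w : T) : nat := #|[set b | e w b]|.

Definition del_edge (T : finType) (e : rel T) (u v : T) : rel T :=
  [rel x y | e x y && ~~ ((x == u) && (y == v) || (x == v) && (y == u))].

Definition cut_edge (T : finType) (e : rel T) (u v : T) : Prop :=
  e u v /\ ~ connected_graph (del_edge e u v).

(* Sombor index: sum over (unordered) edges ab of sqrt(d(a)^2 + d(b)^2),
   written as half of the sum over ordered adjacent pairs. *)
Local Open Scope ring_scope.
Definition sombor (R : rcfType) (T : finType) (e : rel T) : R :=
  (\sum_(a : T) \sum_(b : T | e a b)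
     Num.sqrt (((deg e a)%:R) ^+ 2 + ((deg e b)%:R) ^+ 2)) / 2%:R.
Local Close Scope ring_scope.

(* G': contract uv onto u (u becomes adjacent to all former neighbours of u
   and v other than u, v), then add a new pendent vertex named v adjacent
   to u.  Vertex set unchanged. *)
Definition contract_pendent (T : finType) (e : rel T) (u v : T) : rel T :=
  [rel x y |
    if x == v then y == u
    else if y == v then x == u
    else if x == u then (y != u) && (e u y || e v y)
    else if y == u then e u x || e v x
    else e x y].

From HB Require Import structures.
From mathcomp Require Import all_boot all_order all_algebra perm zify.
Import Order.TTheory GRing.Theory Num.Theory.
Local Open Scope ring_scope.

(* The proof compares the two Sombor sums edge by edge.  Since uv is a cut
   edge, u and v have no common neighbour (otherwise the path u-w-v bypasses
   uv), so in G' the vertex u has degree d(u) + d(v) - 1, v has degree 1, and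
   every other vertex keeps its degree.  The involution [phi] of ordered
   vertex pairs, which moves every edge vz (z a neighbour of v other than u)
   to uz and fixes all other pairs, maps the edges of G bijectively onto the
   edges of G', and does not decrease the degree of either endpoint, except
   at v on the edge uv itself.  Edge by edge the Sombor contribution therefore
   does not decrease, because sqrt(a^2 + b^2) <= sqrt((a+b-1)^2 + 1) for
   a, b >= 1; on uv the inequality is strict as soon as a, b >= 2. *)

Definition edge_weight (R : rcfType) (m n : nat) : R :=
  Num.sqrt (m%:R ^+ 2 + n%:R ^+ 2).

Section EdgeWeight.
Variable R : rcfType.
Local Notation w := (@edge_weight R).

Lemma edge_weightC (m n : nat) : w m n = w n m.
Proof. by rewrite /edge_weight addrC. Qed.

Lemma edge_weight_le (m1 m2 n1 n2 : nat) :
  (m1 <= n1)%N -> (m2 <= n2)%N -> w m1 m2 <= w n1 n2.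
Proof.
move=> le1 le2; rewrite /edge_weight -!natrX -!natrD ler_sqrt ?ler0n //.
by rewrite ler_nat leq_add // leq_exp2r.
Qed.

(* Merging two end vertices: (a+b-1)^2 + 1 - a^2 - b^2 = 2(a-1)(b-1). *)
Lemma edge_weight_merge_le (a b : nat) :
  (1 <= a)%N -> (1 <= b)%N -> w a b <= w (a + b).-1 1.
Proof.
move=> a1 b1; rewrite /edge_weight -!natrX -!natrD ler_sqrt ?ler0n // ler_nat.
rewrite -subn1; nia.
Qed.

Lemma edge_weight_merge_lt (a b : nat) :
  (2 <= a)%N -> (2 <= b)%N -> w a b < w (a + b).-1 1.
Proof.
move=> a2 b2; rewrite /edge_weight -!natrX -!natrD ltr_sqrt ?ltr_nat //.
  by rewrite -subn1; nia.
by rewrite ltr0n -subn1; nia.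
Qed.

End EdgeWeight.

Definition pair_weight (R : rcfType) {T : finType} (e : rel T) (p : T * T) : R :=
  edge_weight R (deg e p.1) (deg e p.2).

Lemma sombor_pairs (R : rcfType) (T : finType) (e : rel T) :
  sombor R e = (\sum_(p : T * T | e p.1 p.2) pair_weight R e p) / 2%:R.
Proof. by rewrite /sombor pair_big_dep. Qed.

Lemma deg_gt0 {T : finType} {e : rel T} {x y : T} : e x y -> (0 < deg e x)%N.
Proof. by move=> exy; apply/card_gt0P; exists y; rewrite inE. Qed.

(* The endpoints of a cut edge have no common neighbour: a common neighbour w
   would give the detour u - w - v around the deleted edge. *)
Lemma cut_edge_no_common_neighbour {T : finType} {e : rel T} {u v : T} (w : T) :
  simple_graph e -> connected_graph e -> cut_edge e u v -> e u w -> e v w ->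
  False.
Proof.
move=> [sym irr] con [euv disconnected] euw evw; apply: disconnected => x y.
have wu : w != u by apply: contraTneq euw => ->; rewrite irr.
have wv : w != v by apply: contraTneq evw => ->; rewrite irr.
set d := del_edge e u v.
have kept a b : e a b -> a != u -> a != v -> d a b.
  by move=> eab au av; rewrite /d /del_edge /= eab (negbTE au) (negbTE av).
have duw : d u w by rewrite /d /del_edge /= euw (negbTE wv) (negbTE wu) !andbF.
have dvw : d v w by rewrite /d /del_edge /= evw (negbTE wv) (negbTE wu) !andbF.
apply: (connect_sub _ (con x y)) => a b eab.
case: (boolP ((a == u) && (b == v) || (a == v) && (b == u))) => [|not_uv].
  case/orP=> /andP[/eqP -> /eqP ->].
    by apply: connect_trans (connect1 duw) (connect1 (kept _ _ _ _ _)); rewrite // sym.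
  by apply: connect_trans (connect1 dvw) (connect1 (kept _ _ _ _ _)); rewrite // sym.
by apply: connect1; rewrite /d /del_edge /= eab not_uv.
Qed.

Section Contraction.
Variables (T : finType) (e : rel T) (u v : T).
Hypotheses (e_sym : symmetric e) (e_irr : irreflexive e) (e_uv : e u v).
Hypothesis no_common : forall w, e u w -> e v w -> False.

Local Notation G' := (contract_pendent e u v).

Let uv : u != v. Proof. by apply: contraTneq e_uv => ->; rewrite e_irr. Qed.
Let vu : v != u. Proof. by rewrite eq_sym uv. Qed.
Let e_vu : e v u. Proof. by rewrite e_sym. Qed.

Lemma contract_v (y : T) : G' v y = (y == u).
Proof. by rewrite /contract_pendent /= eqxx. Qed.

Lemma contract_to_v (x : T) : x != v -> G' x v = (x == u).
Proof. by move=> xv; rewrite /contract_pendent /= (negbTE xv) eqxx. Qed.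

Lemma contract_u (y : T) : y != u -> y != v -> G' u y = e u y || e v y.
Proof. by move=> yu yv; rewrite /contract_pendent /= (negbTE uv) (negbTE yv) eqxx yu. Qed.

Lemma contract_to_u (x : T) : x != u -> x != v -> G' x u = e u x || e v x.
Proof. by move=> xu xv; rewrite /contract_pendent /= (negbTE xu) (negbTE xv) (negbTE uv) eqxx. Qed.

Lemma contract_uv : G' u v = true.
Proof. by rewrite contract_to_v // eqxx. Qed.

Lemma contract_uu : G' u u = false.
Proof. by rewrite /contract_pendent /= (negbTE uv) eqxx. Qed.

Lemma contract_other (x y : T) :
  x != u -> x != v -> y != u -> y != v -> G' x y = e x y.
Proof.
by move=> xu xv yu yv; rewrite /contract_pendent /= (negbTE xu) (negbTE xv) (negbTE yu) (negbTE yv).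
Qed.

Definition moved (z : T) : bool := (z != u) && e v z.

(* The first endpoint of the image of the pair (x, y): when y is a moved
   neighbour of v, x is exchanged with u by the transposition (u v), so that
   the edge vy becomes uy; otherwise x is kept. *)
Definition shift (x y : T) : T := if moved y then tperm u v x else x.

Definition phi (p : T * T) : T * T := (shift p.1 p.2, shift p.2 p.1).

Lemma moved_u : moved u = false. Proof. by rewrite /moved eqxx. Qed.
Lemma moved_v : moved v = false. Proof. by rewrite /moved e_irr andbF. Qed.
Lemma moved_other (z : T) : z != u -> moved z = e v z.
Proof. by move=> zu; rewrite /moved zu. Qed.

Lemma moved_tperm (x : T) : moved (tperm u v x) = moved x.
Proof. by case: (tpermP u v x) => [->|->|//]; rewrite ?moved_u ?moved_v. Qed.

Lemma phi_involutive : involutive phi.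
Proof.
case=> x y; rewrite /phi /shift /=.
by case mx: (moved x); case my: (moved y); rewrite ?moved_tperm ?mx ?my ?tpermK.
Qed.

Lemma contract_shift (x y : T) : G' (shift x y) (shift y x) = e x y.
Proof.
rewrite /shift.
case: (eqVneq x u) => [->|xu]; [|case: (eqVneq x v) => [->|xv]];
  (case: (eqVneq y u) => [->|yu]; [|case: (eqVneq y v) => [->|yv]]);
  rewrite ?moved_u ?moved_v ?e_irr ?contract_uu ?contract_uv ?contract_v ?eqxx ?(negbTE vu) //.
- rewrite moved_other // tpermL; case evy: (e v y); last by rewrite contract_u // evy orbF.
  by rewrite contract_v (negbTE yu); apply/esym/negP => /no_common; apply.
- rewrite moved_other // tpermR.
  by case evy: (e v y); rewrite ?contract_u ?contract_v ?evy ?orbT ?(negbTE yu).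
- rewrite moved_other // tpermL; case evx: (e v x); last by rewrite contract_to_u // evx orbF e_sym.
  by rewrite contract_to_v // (negbTE xu) e_sym; apply/esym/negP => /no_common; apply.
- rewrite moved_other // tpermR; case evx: (e v x).
    by rewrite contract_to_u // evx orbT e_sym.
  by rewrite contract_to_v // (negbTE xu) e_sym evx.
- rewrite !moved_other // !tpermD 1?eq_sym //.
  by case: (e v x); case: (e v y); exact: contract_other.
Qed.

Lemma contract_phi (p : T * T) : G' (phi p).1 (phi p).2 = e p.1 p.2.
Proof. exact: contract_shift. Qed.

Lemma sum_contract_edges (R : nmodType) (F : T * T -> R) :
  \sum_(p | G' p.1 p.2) F p = \sum_(p | e p.1 p.2) F (phi p).
Proof.
rewrite (reindex_inj (can_inj phi_involutive)) /=.
by apply: eq_bigl => p; rewrite contract_phi.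
Qed.

Lemma deg_contract_v : deg G' v = 1%N.
Proof.
rewrite /deg (_ : [set b | G' v b] = [set u]) ?cards1 //.
by apply/setP => b; rewrite !inE contract_v.
Qed.

Lemma deg_contract_u : deg G' u = (deg e u + deg e v).-1.
Proof.
rewrite /deg; have -> : [set b | G' u b] = ([set b | e u b] :|: [set b | e v b]) :\ u.
  apply/setP => b; rewrite !inE.
  case: (eqVneq b u) => [->|bu]; first by rewrite contract_uu.
  case: (eqVneq b v) => [->|bv]; first by rewrite contract_to_v // eqxx e_uv.
  by rewrite contract_u.
have disjoint_nbhds : [set b | e u b] :&: [set b | e v b] = set0.
  by apply/setP => b; rewrite !inE; apply/negP => /andP[] /no_common.
have u_in : u \in [set b | e u b] :|: [set b | e v b] by rewrite !inE e_sym e_uv orbT.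
have := cardsD1 u ([set b | e u b] :|: [set b | e v b]).
by rewrite u_in cardsU disjoint_nbhds cards0 subn0 add1n => ->.
Qed.

Lemma deg_contract_other (w : T) : w != u -> w != v -> deg G' w = deg e w.
Proof.
move=> wu wv; pose s : {perm T} := if e v w then tperm u v else 1%g.
rewrite /deg; suff -> : [set b | G' w b] = s @^-1: [set b | e w b].
  by rewrite card_preimset //; exact: perm_inj.
apply/setP => b; rewrite !inE /s.
case: (eqVneq b u) => [->|bu]; [|case: (eqVneq b v) => [->|bv]].
- rewrite contract_to_u //; case evw: (e v w); first by rewrite tpermL orbT e_sym evw.
  by rewrite perm1 orbF e_sym.
- rewrite contract_to_v // (negbTE wu); case evw: (e v w); last by rewrite perm1 e_sym evw.
  by rewrite tpermR; apply/esym/negP; rewrite e_sym => /no_common; apply.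
- by rewrite contract_other //; case: (e v w); rewrite ?perm1 ?tpermD 1?eq_sym.
Qed.

(* Along an edge xy other than vu, the endpoint x does not lose degree: u
   gains the neighbours of v, and v only loses its edges on the edge vu. *)
Lemma deg_shift_ge (x y : T) :
  e x y -> ~~ ((x == v) && (y == u)) -> (deg e x <= deg G' (shift x y))%N.
Proof.
move=> exy not_vu; have yx : y != x by apply: contraTneq exy => ->; rewrite e_irr.
have du := deg_gt0 e_uv; have dv := deg_gt0 e_vu.
rewrite /shift; case: (eqVneq x u) => [xu|xu]; [|case: (eqVneq x v) => [xv|xv]].
- subst x; rewrite moved_other //.
  case evy: (e v y); first by case: (no_common _ exy evy).
  by rewrite deg_contract_u -subn1; lia.
- subst x; rewrite eqxx /= in not_vu; rewrite moved_other // exy tpermR deg_contract_u.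
  by rewrite -subn1; lia.
- by case: (moved y); rewrite ?tpermD 1?eq_sym // deg_contract_other.
Qed.

Section Weights.
Variable R : rcfType.

(* Every edge of G weighs at most its image in G'; on the edge uv (in either
   orientation) this is the merging inequality. *)
Lemma pair_weight_le (p : T * T) :
  e p.1 p.2 -> pair_weight R e p <= pair_weight R G' (phi p).
Proof.
case: p => x y /= exy.
have merge := @edge_weight_merge_le R _ _ (deg_gt0 e_uv) (deg_gt0 e_vu).
rewrite /pair_weight /phi /shift /=.
case: (boolP ((x == u) && (y == v))) => [/andP[/eqP -> /eqP ->]|not_uv].
  by rewrite moved_u moved_v deg_contract_u deg_contract_v.
case: (boolP ((x == v) && (y == u))) => [/andP[/eqP -> /eqP ->]|not_vu].
  rewrite moved_u moved_v deg_contract_u deg_contract_v.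
  by rewrite edge_weightC [X in _ <= X]edge_weightC.
apply: edge_weight_le; first exact: deg_shift_ge.
by apply: deg_shift_ge; rewrite 1?e_sym // andbC.
Qed.

Lemma pair_weight_uv_lt :
  (2 <= deg e u)%N -> (2 <= deg e v)%N ->
  pair_weight R e (u, v) < pair_weight R G' (phi (u, v)).
Proof.
move=> du dv; rewrite /pair_weight /phi /shift /= moved_u moved_v.
by rewrite deg_contract_u deg_contract_v; exact: edge_weight_merge_lt.
Qed.

End Weights.

End Contraction.

Theorem lemma3p1 (R : rcfType) (T : finType) (e : rel T) (u v : T) :
  simple_graph e -> connected_graph e -> cut_edge e u v ->
  (2 <= deg e u)%N -> (2 <= deg e v)%N ->
  sombor R e < sombor R (contract_pendent e u v).
Proof.
move=> simple con cut du dv.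
have no_common w := cut_edge_no_common_neighbour w simple con cut.
have [e_sym e_irr] := simple; have [e_uv _] := cut.
rewrite !sombor_pairs ltr_pM2r ?invr_gt0 ?ltr0n // sum_contract_edges //.
rewrite (bigD1 (u, v)) //= [X in _ < X](bigD1 (u, v)) //=.
apply: ltr_leD; first exact: pair_weight_uv_lt.
by apply: ler_sum => p /andP[ep _]; apply: pair_weight_le.
Qed.
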